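(* Suppose the budget and utility parameters of users are drawn i.i.d. from a distribution $\mathcal{D}$ such that (i) for each good $j$, $\mathbb{P}_{\mathcal{D}}(u_j>0)>0$, and (ii) $\mathbf{u}\in[\underline{\mathbf{u}},\bar{\mathbf{u}}]$ and $w\in[\underline w,\bar w]$ with $\underline u,\underline w>0$. Then the price vectors $\mathbf{p}^t$ of the revealed preference algorithm described below remain strictly positive and bounded for all users $t\in[n]$ when $\gamma=\gamma_t=\bar D/\sqrt n$ for all $t\in[n]$, for some constant $\bar D>0$; that is, there are constants $0<\underline p\le\bar p$ with $\underline p\le p_j^t\le\bar p$ for all goods $j$ and all $t$.
   Context: Online Fisher market: $m$ divisible goods, good $j$ with capacity $c_j=nd_j$, $\mathbf{d}>\mathbf{0}$; $n$ users with $(w_t,\mathbf{u}_t)$ i.i.d. from $\mathcal{D}$. Given $\mathbf{p}^t$, user $t$ consumes an optimal solution $\mathbf{x}_t$ of $\max\mathbf{u}_t^\top\mathbf{x}$ s.t. $(\mathbf{p}^t)^\top\mathbf{x}\le w_t$, $\mathbf{x}\ge\mathbf{0}$. Revealed preference algorithm: initialize $\mathbf{p}^1>\mathbf{0}$; for $t=1,\dots,n$, user $t$ consumes $\mathbf{x}_t$ at price $\mathbf{p}^t$ and $\mathbf{p}^{t+1}=\mathbf{p}^t-\gamma_t(\mathbf{d}-\mathbf{x}_t)$ (no projection). The constants $\underline p,\bar p$ do not depend on $n$ or $t$. *)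

From HB Require Import structures.
From mathcomp Require Import all_boot all_order all_algebra.
From mathcomp Require Import reals.
Set Implicit Arguments. Unset Strict Implicit. Unset Printing Implicit Defensive.
Import Order.TTheory GRing.Theory Num.Theory.
Local Open Scope ring_scope.

Definition budget_feasible {R : numDomainType} {m : nat}
  (p : 'I_m -> R) (w : R) (x : 'I_m -> R) : Prop :=
  (forall j, 0 <= x j) /\ \sum_(j < m) p j * x j <= w.

Definition optimal_consumption {R : numDomainType} {m : nat}
  (p : 'I_m -> R) (w : R) (u x : 'I_m -> R) : Prop :=
  budget_feasible p w x /\
  forall y, budget_feasible p w y -> \sum_(j < m) u j * y j <= \sum_(j < m) u j * x j.

(* Revealed-preference price sequence, 0-based:
   rp_price p1 gamma d x 0 = p^1 and
   rp_price ... (k+1) = rp_price ... k - gamma (d - x k),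
   where x k is the consumption of user k+1 (0-based user index k),
   i.e. rp_price ... k = p^{k+1}.  No projection. *)
Fixpoint rp_price {R : numDomainType} {m : nat} (p1 : 'I_m -> R) (gamma : R)
  (d : 'I_m -> R) (x : nat -> 'I_m -> R) (k : nat) : 'I_m -> R :=
  match k with
  | 0 => p1
  | k'.+1 => fun j => rp_price p1 gamma d x k' j - gamma * (d j - x k' j)
  end.

From HB Require Import structures.
From mathcomp Require Import all_boot all_order all_algebra.
From mathcomp Require Import reals.
From mathcomp Require Import ring lra.
Set Implicit Arguments. Unset Strict Implicit. Unset Printing Implicit Defensive.
Import Order.TTheory GRing.Theory Num.Theory.
Local Open Scope ring_scope.

(* Upper bound: a user spends at most whi, so once p_j >= whi / d_j the demand
   for good j is below d_j and the price can only fall; below that level one step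
   raises it by at most gamma x_j <= gamma whi / plo.
   Lower bound: if p_j < theta, every good bought gives at least the utility per
   unit of price of good j, hence costs at most K theta, where K bounds the ratios
   u_i / u_j; spending at least wlo, the user buys at least wlo / (K theta) units,
   which is at least E + D for D >= sum_i d_i and a suitably large E.  For the
   capped potential Psi = sum_i min(p_i, 2 K theta) such a step then gains at
   least min(gamma sum_i x_i, K theta) - gamma sum_i d_i >= gamma E, while p_j
   falls by at most gamma d_j.  So p_j + (d_j / E) (Psi + gamma D) never drops
   below theta - gamma d_j, and 0 <= Psi <= 2 m K theta turns this into
   p_j >= theta / 2. *)

Section FiniteFamilies.
Variables (R : realFieldType) (m : nat).
Implicit Types (a x : 'I_m -> R).

Lemma ler_term_sum a j : (forall i, 0 <= a i) -> a j <= \sum_i a i.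
Proof. by move=> a_ge0; rewrite (bigD1 j) //= lerDl sumr_ge0. Qed.

Lemma ubound_finfun a : exists2 C, 1 <= C & forall j, a j <= C.
Proof.
exists (1 + \sum_i `|a i|); first by rewrite lerDl sumr_ge0.
move=> j; have := ler_term_sum j (fun i => normr_ge0 (a i)).
by have := ler_norm (a j); lra.
Qed.

Lemma lbound_finfun_gt0 a : (forall j, 0 < a j) ->
  exists c, [/\ 0 < c, c <= 1 & forall j, c <= a j].
Proof.
move=> a_gt0; have [C C_ge1 aC] := ubound_finfun (fun j => (a j)^-1).
have C_gt0 : 0 < C := lt_le_trans ltr01 C_ge1.
exists C^-1; split; rewrite ?invr_gt0 ?invf_le1 // => j.
by rewrite -[a j]invrK lef_pV2 ?posrE ?invr_gt0.
Qed.

Definition shift x (l : 'I_m) c : 'I_m -> R := fun i => x i + (i == l)%:R * c.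

Lemma sum_mul_shift a x l c :
  \sum_i a i * shift x l c i = \sum_i a i * x i + a l * c.
Proof.
under eq_bigr do rewrite mulrDr; rewrite big_split /=; congr (_ + _).
rewrite (bigD1 l) //= eqxx mul1r big1 ?addr0 // => i /negbTE->.
by rewrite mul0r mulr0.
Qed.

End FiniteFamilies.

Section OptimalConsumption.
Variables (R : realFieldType) (m : nat) (p u x : 'I_m -> R) (w : R).
Hypotheses (x_opt : optimal_consumption p w u x)
  (p_gt0 : forall i, 0 < p i) (u_gt0 : forall i, 0 < u i).

Lemma optimal_consumption_spends_budget (l : 'I_m) : w <= \sum_i p i * x i.
Proof.
case: x_opt => -[x_ge0 _] x_max; rewrite leNgt; apply/negP => slack.
pose c := (w - \sum_i p i * x i) / p l.
have c_gt0 : 0 < c by rewrite divr_gt0 // subr_gt0.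
have feasible : budget_feasible p w (shift x l c).
  split=> [i|]; first exact: addr_ge0 (x_ge0 i) (mulr_ge0 (ler0n _ _) (ltW c_gt0)).
  by rewrite sum_mul_shift mulrC divfK ?gt_eqF // addrC subrK.
have := x_max _ feasible; rewrite sum_mul_shift gerDl leNgt => /negP; apply.
exact: mulr_gt0.
Qed.

Lemma optimal_consumption_bang_per_buck i l : 0 < x i -> u l * p i <= u i * p l.
Proof.
case: x_opt => -[x_ge0 x_budget] x_max xi_gt0; rewrite leNgt; apply/negP => better.
have neq_il : i != l by apply: contraTneq better => ->; rewrite ltxx.
pose q := x i * p i / p l.
have q_ge0 : 0 <= q by rewrite divr_ge0 ?mulr_ge0 ?ltW.
have feasible : budget_feasible p w (shift (shift x i (- x i)) l q).
  split=> [k|].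
    rewrite /shift; case: (eqVneq k i) => [->|_].
      by rewrite (negbTE neq_il) mul1r mul0r addr0 subrr.
    by rewrite mul0r addr0; apply: addr_ge0 (x_ge0 k) (mulr_ge0 (ler0n _ _) q_ge0).
  rewrite !sum_mul_shift mulrN.
  have -> : p l * q = p i * x i by rewrite /q mulrC divfK ?gt_eqF // mulrC.
  by rewrite subrK x_budget.
have := x_max _ feasible; rewrite !sum_mul_shift mulrN -addrA gerDl addrC subr_le0.
rewrite leNgt => /negP; apply.
have -> : u i * x i = x i / p l * (u i * p l) by field; rewrite gt_eqF.
have -> : u l * q = x i / p l * (u l * p i) by rewrite /q; ring.
by rewrite ltr_pM2l ?divr_gt0.
Qed.

Lemma optimal_consumption_cheap (K : R) i j :
  u i <= K * u j -> 0 < x i -> p i <= K * p j.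
Proof.
move=> uK xi_gt0; rewrite -(ler_pM2l (u_gt0 j)) mulrCA.
apply: le_trans (optimal_consumption_bang_per_buck j xi_gt0) _.
by rewrite mulrA ler_wpM2r // ltW.
Qed.

End OptimalConsumption.

Section CappedSum.
Variables (R : realFieldType) (m : nat).
Implicit Types (M a b c q gamma : R) (d p x : 'I_m -> R).

Lemma min_subr_ge q a M : 0 <= a -> Num.min q M - a <= Num.min (q - a) M.
Proof.
move=> a_ge0; rewrite le_min lerD2r ge_min lexx /= lerBlDr.
have min_le_M : Num.min q M <= M by rewrite ge_min lexx orbT.
by rewrite (le_trans min_le_M) // lerDl.
Qed.

Lemma min_addr_ge q b c M : 0 <= b -> 0 <= c -> (0 < b -> q + c <= M) ->
  Num.min q M + Num.min b c <= Num.min (q + b) M.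
Proof.
move=> b_ge0 c_ge0 cap; move: b_ge0; rewrite le_eqVlt => /orP[/eqP<-|b_gt0].
  by rewrite (min_l c_ge0) !addr0.
have q_le_M : q <= M by rewrite (le_trans _ (cap b_gt0)) // lerDl.
rewrite (min_l q_le_M) le_min !lerD2l ge_min lexx /=.
by rewrite (le_trans _ (cap b_gt0)) // lerD2l ge_min lexx orbT.
Qed.

Lemma min_sum_le (s : 'I_m -> R) c : (forall i, 0 <= s i) -> 0 <= c ->
  Num.min (\sum_i s i) c <= \sum_i Num.min (s i) c.
Proof.
move=> s_ge0 c_ge0.
have min_ge0 i : 0 <= Num.min (s i) c by rewrite le_min s_ge0.
case: (boolP [exists i, c <= s i]) => [/existsP[i c_le]|].
  apply: le_trans (ler_term_sum i min_ge0).
  by rewrite (min_r c_le) ge_min lexx orbT.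
rewrite negb_exists => /forallP small.
have s_lt i : s i < c by rewrite ltNge small.
under [X in _ <= X]eq_bigr => i _ do rewrite (min_l (ltW (s_lt i))).
by rewrite ge_min lexx.
Qed.

Definition capped_sum M p := \sum_i Num.min (p i) M.

Lemma capped_sum_le M p : capped_sum M p <= m%:R * M.
Proof.
rewrite mulr_natl -[m in _ *+ m]card_ord -sumr_const.
by apply: ler_sum => i _; rewrite ge_min lexx orbT.
Qed.

Lemma capped_sum_ge0 M p : 0 <= M -> (forall i, 0 <= p i) -> 0 <= capped_sum M p.
Proof. by move=> M_ge0 p_ge0; apply: sumr_ge0 => i _; rewrite le_min p_ge0. Qed.

Lemma capped_sum_step_ge M gamma d p x : 0 <= gamma ->
  (forall i, 0 <= d i) -> (forall i, 0 <= x i) ->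
  capped_sum M p - gamma * \sum_i d i
    <= capped_sum M (fun i => p i - gamma * (d i - x i)).
Proof.
move=> g_ge0 d_ge0 x_ge0; rewrite /capped_sum mulr_sumr -sumrB.
apply: ler_sum => i _.
have -> : p i - gamma * (d i - x i) = p i + gamma * x i - gamma * d i by ring.
apply: le_trans (min_subr_ge _ _ (mulr_ge0 g_ge0 (d_ge0 i))).
by rewrite lerD2r le_min !ge_min lexx orbT andbT lerDl mulr_ge0.
Qed.

Lemma capped_sum_step_gain M c gamma d p x : 0 < gamma -> 0 <= c ->
  (forall i, 0 <= d i) -> (forall i, 0 <= x i) ->
  (forall i, 0 < x i -> p i + c <= M) ->
  capped_sum M p + Num.min (gamma * \sum_i x i) c - gamma * \sum_i d i
    <= capped_sum M (fun i => p i - gamma * (d i - x i)).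
Proof.
move=> g_gt0 c_ge0 d_ge0 x_ge0 cheap.
have gx_ge0 i : 0 <= gamma * x i := mulr_ge0 (ltW g_gt0) (x_ge0 i).
apply: (@le_trans _ _ (capped_sum M p + \sum_i Num.min (gamma * x i) c
                       - gamma * \sum_i d i)).
  by rewrite lerD2r lerD2l mulr_sumr min_sum_le.
rewrite /capped_sum mulr_sumr -big_split -sumrB; apply: ler_sum => i _ /=.
have -> : p i - gamma * (d i - x i) = p i + gamma * x i - gamma * d i by ring.
apply: le_trans (min_subr_ge _ _ (mulr_ge0 (ltW g_gt0) (d_ge0 i))).
by rewrite lerD2r min_addr_ge // pmulr_rgt0 //; exact: cheap.
Qed.

End CappedSum.

Lemma price_step_le (R : realFieldType) (q y W dj gamma : R) :
  0 < q -> 0 <= y -> q * y <= W -> 0 < dj -> 0 <= gamma ->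
  q - gamma * (dj - y) <= Num.max q (W / dj + gamma * y).
Proof.
move=> q_gt0 y_ge0 qyW dj_gt0 g_ge0; rewrite le_max.
have [y_le_dj|dj_lt_y] := leP y dj.
  by rewrite gerBl mulr_ge0 // subr_ge0.
have q_le : q <= W / dj.
  by rewrite ler_pdivlMr // (le_trans _ qyW) // ltW // ltr_pM2l.
apply/orP; right; have := mulr_ge0 g_ge0 (ltW dj_gt0); lra.
Qed.

Section PriceBounds.
Variables (R : realFieldType) (m : nat) (d p1 : 'I_m -> R) (gamma : R).
Variables (w : nat -> R) (u x : nat -> 'I_m -> R) (wlo whi K : R) (k : nat).
Hypotheses (d_gt0 : forall j, 0 < d j) (gamma_gt0 : 0 < gamma).
Hypotheses (w_bounds : forall s, wlo <= w s <= whi) (K_gt0 : 0 < K).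
Hypotheses (u_gt0 : forall s i, 0 < u s i) (u_ratio : forall s i j, u s i <= K * u s j).

Let P := rp_price p1 gamma d x.

Hypothesis optimal_before :
  forall s, (s < k)%N -> optimal_consumption (P s) (w s) (u s) (x s).

Lemma rp_consumption_ge0 s i : (s < k)%N -> 0 <= x s i.
Proof. by move=> /optimal_before[[]]. Qed.

Lemma rp_spending_le s : (s < k)%N -> \sum_i P s i * x s i <= whi.
Proof.
move=> /optimal_before[[_ spent] _]; apply: le_trans spent _.
by case/andP: (w_bounds s).
Qed.

Variables (theta E D Dbar plo : R).
Hypotheses (theta_gt0 : 0 < theta) (theta_le_p1 : forall j, theta <= p1 j).
Hypotheses (E_gt0 : 0 < E) (sum_d_le : \sum_i d i <= D) (gamma_le : gamma <= Dbar).
Hypotheses (demand_large : (E + D) * (K * theta) <= wlo)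
  (step_small : Dbar * (E + D) <= K * theta).
Hypotheses (plo_gt0 : 0 < plo)
  (plo_le : plo <= theta - Dbar * D - D / E * (m%:R * (2 * (K * theta)) + Dbar * D)).

Let Psi s := capped_sum (2 * (K * theta)) (P s).

Let d_ge0 i : 0 <= d i := ltW (d_gt0 i).

Let d_le j : d j <= D := le_trans (ler_term_sum j d_ge0) sum_d_le.

Lemma rp_potential_ge0 s : (forall i, 0 < P s i) -> 0 <= Psi s.
Proof.
move=> P_gt0; apply: capped_sum_ge0 => [|i]; last exact: ltW.
by rewrite mulr_ge0 // ltW // mulr_gt0.
Qed.

Lemma rp_potential_drop s : (s < k)%N -> Psi s - gamma * D <= Psi s.+1.
Proof.
move=> sk; have x_ge0 i : 0 <= x s i := rp_consumption_ge0 i sk.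
apply: le_trans _ (capped_sum_step_ge _ _ (ltW gamma_gt0) d_ge0 x_ge0).
by rewrite lerD2l lerN2 ler_wpM2l // ltW.
Qed.

Lemma rp_potential_gain s j : (s < k)%N -> (forall i, 0 < P s i) -> P s j < theta ->
  Psi s + gamma * E <= Psi s.+1.
Proof.
move=> sk P_gt0 Pj_lt.
have opt := optimal_before sk.
have x_ge0 i : 0 <= x s i := rp_consumption_ge0 i sk.
have Ktheta_gt0 : 0 < K * theta by rewrite mulr_gt0.
have cheap i : 0 < x s i -> P s i <= K * theta.
  move=> xi_gt0; have := optimal_consumption_cheap opt P_gt0 (u_gt0 s) (u_ratio s i j) xi_gt0.
  by move/le_trans; apply; rewrite ler_wpM2l // ltW.
have demand : E + D <= \sum_i x s i.
  rewrite -(ler_pM2r Ktheta_gt0) (le_trans demand_large) //.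
  have [wlo_le _] := andP (w_bounds s).
  have spent := optimal_consumption_spends_budget opt P_gt0 (u_gt0 s) j.
  apply: le_trans wlo_le (le_trans spent _).
  rewrite mulr_suml; apply: ler_sum => i _.
  have := x_ge0 i; rewrite le_eqVlt => /orP[/eqP<-|xi_gt0]; first by rewrite !mulr0 mul0r.
  by rewrite mulrC ler_wpM2l // cheap.
have ED_ge0 : 0 <= E + D := addr_ge0 (ltW E_gt0) (le_trans (d_ge0 j) (d_le j)).
have gain : gamma * (E + D) <= Num.min (gamma * \sum_i x s i) (K * theta).
  rewrite le_min (ler_wpM2l (ltW gamma_gt0) demand) /=.
  exact: le_trans (ler_wpM2r ED_ge0 gamma_le) step_small.
have bought_cap i : 0 < x s i -> P s i + K * theta <= 2 * (K * theta).
  by move=> /cheap; lra.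
have := capped_sum_step_gain gamma_gt0 (ltW Ktheta_gt0) d_ge0 x_ge0 bought_cap.
have := ler_wpM2l (ltW gamma_gt0) sum_d_le.
rewrite -/(Psi s) -/(Psi s.+1); lra.
Qed.

Let invariant s j := theta - gamma * d j <= P s j + d j / E * (Psi s + gamma * D).

Lemma rp_invariant_price_ge s j : invariant s j -> plo <= P s j.
Proof.
rewrite /invariant => inv.
have D_ge0 : 0 <= D := le_trans (d_ge0 j) (d_le j).
have Einv_ge0 : 0 <= E^-1 by rewrite invr_ge0 ltW.
have a_ge0 : 0 <= d j / E := mulr_ge0 (d_ge0 j) Einv_ge0.
have a_le : d j / E <= D / E := ler_wpM2r Einv_ge0 (d_le j).
have Y_ge0 : 0 <= m%:R * (2 * (K * theta)) + Dbar * D.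
  have := mulr_ge0 (ltW (lt_le_trans gamma_gt0 gamma_le)) D_ge0.
  have := mulr_ge0 (ler0n R m) (ltW (mulr_gt0 K_gt0 theta_gt0)); lra.
have bound : d j / E * (Psi s + gamma * D)
             <= D / E * (m%:R * (2 * (K * theta)) + Dbar * D).
  apply: le_trans _ (ler_wpM2r Y_ge0 a_le); rewrite ler_wpM2l //.
  by rewrite lerD ?capped_sum_le // ler_wpM2r.
have := ler_pM (ltW gamma_gt0) (d_ge0 j) gamma_le (d_le j).
have := plo_le; lra.
Qed.

Lemma rp_invariant_step s : (s < k)%N ->
  (forall j, invariant s j) -> forall j, invariant s.+1 j.
Proof.
move=> sk inv_s j.
have P_gt0 i : 0 < P s i := lt_le_trans plo_gt0 (rp_invariant_price_ge (inv_s i)).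
have Pj_drop : P s j - gamma * d j <= P s.+1 j.
  rewrite /= lerD2l lerN2 (ler_wpM2l (ltW gamma_gt0)) // gerBl.
  exact: rp_consumption_ge0.
have a_ge0 : 0 <= d j / E := divr_ge0 (d_ge0 j) (ltW E_gt0).
have := inv_s j; rewrite /invariant.
have [Pj_lt|Pj_ge] := ltP (P s j) theta.
  have := ler_wpM2l a_ge0 (rp_potential_gain sk P_gt0 Pj_lt).
  have -> : d j / E * (Psi s + gamma * E) = d j / E * Psi s + gamma * d j.
    by field; rewrite gt_eqF.
  lra.
have : 0 <= d j / E * (Psi s.+1 + gamma * D).
  rewrite mulr_ge0 //; have := rp_potential_drop sk; have := rp_potential_ge0 P_gt0; lra.
lra.
Qed.

Lemma rp_price_ge s : (s <= k)%N -> forall j, plo <= P s j.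
Proof.
suff inv : (s <= k)%N -> forall j, invariant s j.
  by move=> sk j; apply: rp_invariant_price_ge (inv sk j).
elim: s => [_ j|s IH sk]; last exact: rp_invariant_step sk (IH (ltnW sk)).
have p1_gt0 i : 0 < p1 i := lt_le_trans theta_gt0 (theta_le_p1 i).
have D_ge0 : 0 <= D := le_trans (d_ge0 j) (d_le j).
have := mulr_ge0 (divr_ge0 (d_ge0 j) (ltW E_gt0))
  (addr_ge0 (@rp_potential_ge0 0 p1_gt0) (mulr_ge0 (ltW gamma_gt0) D_ge0)).
rewrite /invariant /P /=; have := theta_le_p1 j.
have := mulr_ge0 (ltW gamma_gt0) (d_ge0 j); lra.
Qed.

Lemma rp_price_le s : (s <= k)%N ->
  forall j, P s j <= Num.max (p1 j) (whi / d j + Dbar * (whi / plo)).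
Proof.
elim: s => [_ j|s IH sk j]; first by rewrite le_max lexx.
have P_ge i : plo <= P s i := rp_price_ge (ltnW sk) i.
have P_gt0 i : 0 < P s i := lt_le_trans plo_gt0 (P_ge i).
have Px_ge0 i : 0 <= P s i * x s i := mulr_ge0 (ltW (P_gt0 i)) (rp_consumption_ge0 i sk).
have Px_le : P s j * x s j <= whi := le_trans (ler_term_sum j Px_ge0) (rp_spending_le sk).
have x_le : x s j <= whi / plo.
  rewrite ler_pdivlMr // (le_trans _ Px_le) // mulrC ler_wpM2r //.
  exact: rp_consumption_ge0.
have step := price_step_le (P_gt0 j) (rp_consumption_ge0 j sk) Px_le (d_gt0 j) (ltW gamma_gt0).
apply: le_trans step _; rewrite ge_max IH ?(ltnW sk) //= le_max; apply/orP; right.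
by rewrite lerD2l (ler_pM (ltW gamma_gt0) (rp_consumption_ge0 j sk)).
Qed.

Lemma rp_price_bounds s : (s <= k)%N ->
  forall j, plo <= P s j <= Num.max (p1 j) (whi / d j + Dbar * (whi / plo)).
Proof. by move=> sk j; rewrite rp_price_ge // rp_price_le. Qed.

End PriceBounds.

Lemma price_margin (R : realFieldType) (mr K D E Dbar theta : R) :
  0 <= mr -> 1 <= K -> 0 < D -> 0 < theta -> 0 <= Dbar ->
  8 * (mr + 1) * K * D <= E -> Dbar * (E + D) <= K * theta ->
  theta / 2 <= theta - Dbar * D - D / E * (mr * (2 * (K * theta)) + Dbar * D).
Proof.
move=> mr_ge0 K_ge1 D_gt0 theta_gt0 Dbar_ge0 E_ge step_small.
have K_gt0 : 0 < K := lt_le_trans ltr01 K_ge1.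
have D_le_KD : D <= K * D by rewrite -{1}[D]mul1r ler_wpM2r // ltW.
have mrKD_ge0 : 0 <= mr * (K * D) by rewrite !mulr_ge0 // ltW.
have KD_le_E : 8 * (K * D) <= E by lra.
have E_gt0 : 0 < E by lra.
have demand_term : D / E * (mr * (2 * (K * theta))) <= theta / 4.
  rewrite mulrAC ler_pdivrMr //.
  have theta4_ge0 : 0 <= theta / 4 by lra.
  have := ler_wpM2l theta4_ge0 E_ge; have := mulr_ge0 (ltW (mulr_gt0 K_gt0 D_gt0)) (ltW theta_gt0).
  lra.
have drop_term : Dbar * D <= theta / 8.
  rewrite -(ler_pM2l K_gt0); have := ler_wpM2l Dbar_ge0 KD_le_E.
  have := mulr_ge0 Dbar_ge0 (ltW D_gt0); lra.
have DE_le1 : D / E <= 1 by rewrite ler_pdivrMr // mul1r; lra.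
have := ler_wpM2r (mulr_ge0 Dbar_ge0 (ltW D_gt0)) DE_le1.
lra.
Qed.

Lemma ratio_bound_finfun (R : realFieldType) m (lo hi : 'I_m -> R) :
  (forall j, 0 < lo j) -> exists2 K, 1 <= K & forall i j, hi i <= K * lo j.
Proof.
move=> lo_gt0; have [U U_ge1 hi_le] := ubound_finfun hi.
have [L [L_gt0 L_le1 L_le_lo]] := lbound_finfun_gt0 lo_gt0.
have K_ge1 : 1 <= U / L by rewrite ler_pdivlMr // mul1r (le_trans L_le1 U_ge1).
exists (U / L) => // i j; apply: le_trans (hi_le i) _.
rewrite -{1}(divfK (lt0r_neq0 L_gt0) U) ler_wpM2l //.
by rewrite ltW // (lt_le_trans ltr01).
Qed.

Lemma step_constants (R : realFieldType) (mr K D wlo theta0 : R) :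
  0 <= mr -> 1 <= K -> 0 < D -> 0 < wlo -> 0 < theta0 ->
  exists theta E Dbar, [/\ 0 < theta, theta <= theta0, 0 < E, 0 < Dbar &
    [/\ (E + D) * (K * theta) <= wlo, Dbar * (E + D) <= K * theta &
        theta / 2 <= theta - Dbar * D - D / E * (mr * (2 * (K * theta)) + Dbar * D)]].
Proof.
move=> mr_ge0 K_ge1 D_gt0 wlo_gt0 theta0_gt0.
have K_gt0 : 0 < K := lt_le_trans ltr01 K_ge1.
pose E := 8 * (mr + 1) * K * D.
have KD_gt0 : 0 < K * D := mulr_gt0 K_gt0 D_gt0.
have E_gt0 : 0 < E by rewrite /E; have := mulr_ge0 mr_ge0 (ltW KD_gt0); lra.
have EDK_gt0 : 0 < (E + D) * K by rewrite mulr_gt0 // addr_gt0.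
pose theta := Num.min theta0 (wlo / ((E + D) * K)).
have theta_gt0 : 0 < theta by rewrite lt_min theta0_gt0 divr_gt0.
pose Dbar := K * theta / (E + D).
have Dbar_gt0 : 0 < Dbar by rewrite divr_gt0 ?mulr_gt0 ?addr_gt0.
have step_small : Dbar * (E + D) <= K * theta by rewrite divfK ?gt_eqF ?addr_gt0.
exists theta, E, Dbar; split=> //; first by rewrite ge_min lexx.
split=> //.
  by rewrite mulrA mulrC -ler_pdivlMr // ge_min lexx orbT.
exact: price_margin mr_ge0 K_ge1 D_gt0 theta_gt0 (ltW Dbar_gt0) (lexx E) step_small.
Qed.

Lemma step_size_bounds (R : rcfType) (Dbar : R) n : 0 < Dbar -> (0 < n)%N ->
  0 < Dbar / Num.sqrt n%:R <= Dbar.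
Proof.
move=> Dbar_gt0 n_gt0.
have sqrt_ge1 : 1 <= Num.sqrt (n%:R : R) by rewrite -{1}sqrtr1 ler_sqrt ?ler1n.
have sqrt_gt0 : 0 < Num.sqrt (n%:R : R) := lt_le_trans ltr01 sqrt_ge1.
by rewrite divr_gt0 //= ler_pdivrMr // ler_peMr // ltW.
Qed.

Theorem lemma7 (R : realType) (m : nat) (d : 'I_m -> R)
  (ulo uhi : 'I_m -> R) (wlo whi : R) (p1 : 'I_m -> R) :
  (forall j, 0 < d j) ->
  (forall j, 0 < ulo j) -> (forall j, ulo j <= uhi j) ->
  0 < wlo -> wlo <= whi ->
  (forall j, 0 < p1 j) ->
  exists Dbar : R, 0 < Dbar /\
  exists plo phi : R, 0 < plo /\ plo <= phi /\
  forall (n : nat) (w : nat -> R) (u x : nat -> 'I_m -> R),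
    (0 < n)%N ->
    (forall k, wlo <= w k <= whi) ->
    (forall k j, ulo j <= u k j <= uhi j) ->
    forall k : nat, (k < n)%N ->
      (forall s : nat, (s < k)%N ->
         optimal_consumption (rp_price p1 (Dbar / Num.sqrt n%:R) d x s)
                             (w s) (u s) (x s)) ->
      forall j, plo <= rp_price p1 (Dbar / Num.sqrt n%:R) d x k j <= phi.
Proof.
move=> d_gt0 ulo_gt0 _ wlo_gt0 _ p1_gt0.
have [K K_ge1 uhi_le] := ratio_bound_finfun uhi ulo_gt0.
have K_gt0 : 0 < K := lt_le_trans ltr01 K_ge1.
have [theta0 [theta0_gt0 _ theta0_le_p1]] := lbound_finfun_gt0 p1_gt0.
pose D := 1 + \sum_i d i.
have D_gt0 : 0 < D by rewrite ltr_wpDr // sumr_ge0 // => i _; apply: ltW.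
have [theta [E [Dbar [theta_gt0 theta_le E_gt0 Dbar_gt0 [demand_large step_small plo_le]]]]]
  := step_constants (ler0n R m) K_ge1 D_gt0 wlo_gt0 theta0_gt0.
pose plo := theta / 2; pose B j := Num.max (p1 j) (whi / d j + Dbar * (whi / plo)).
have B_ge0 i : 0 <= B i by rewrite le_max ltW.
exists Dbar; split=> //; exists plo, (Num.max plo (\sum_i B i)).
split; first by rewrite divr_gt0.
split=> [|n w u x n_gt0 w_bounds u_bounds k _ opt j]; first by rewrite le_max lexx.
have /andP[gamma_gt0 gamma_le] := step_size_bounds Dbar_gt0 n_gt0.
have u_gt0 s i : 0 < u s i.
  by have /andP[ulo_le _] := u_bounds s i; exact: lt_le_trans (ulo_gt0 i) ulo_le.
have u_ratio s i i' : u s i <= K * u s i'.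
  have /andP[_ u_le] := u_bounds s i; have /andP[ulo_le _] := u_bounds s i'.
  by rewrite (le_trans u_le) // (le_trans (uhi_le i i')) // ler_wpM2l // ltW.
have theta_le_p1 i : theta <= p1 i := le_trans theta_le (theta0_le_p1 i).
have sum_d_le : \sum_i d i <= D by rewrite lerDr.
have /andP[lower upper] := rp_price_bounds d_gt0 gamma_gt0 w_bounds K_gt0 u_gt0 u_ratio
  opt theta_gt0 theta_le_p1 E_gt0 sum_d_le gamma_le demand_large step_small
  (divr_gt0 theta_gt0 (ltr0Sn _ 1)) plo_le (leqnn k) j.
by rewrite lower (le_trans upper) // le_max (ler_term_sum j B_ge0) orbT.
Qed.
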